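(* Fix $n\ge2$ and a point $H\in\mathcal S_n$, with first currents $H^{(1)},\dots,H^{(n-1)}$. Define the stationary Faà di Bruno basis $\{F^{(j)}\}_{j\in\mathbb Z}$ by $F^{(a)}=H^{(a)}$ for $a=0,\dots,n-1$ (with $H^{(0)}=1$) and $F^{(j+n)}=z^nF^{(j)}$ for all $j\in\mathbb Z$. Let $\widetilde{\mathcal H}_+$ be the span of $\{F^{(j)}\}_{j\ge0}$ and $\widetilde{\mathcal H}_-$ the space of (possibly infinite) combinations of $\{F^{(j)}\}_{j<0}$, so $\mathcal L=\widetilde{\mathcal H}_+\oplus\widetilde{\mathcal H}_-$ with projections $\tilde\pi_\pm$. Then for every $j\ge0$ the current $H^{(j)}$ of the point $H$ equals $\tilde\pi_+(z^j)$, and the restriction of the central system vector field $X_j$ to $\mathcal S_n$, written in the coordinates $(H^{(1)},\dots,H^{(n-1)})$, is $$\frac{\partial H^{(a)}}{\partial t_j}=-\tilde\pi_-\big(H^{(a)}\,\tilde\pi_+(z^j)\big),\qquad a=1,\dots,n-1,\ j\ge1.$$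
   Context: Let $z$ be a formal variable and $\mathcal L$ the space of formal Laurent series $\sum_{j\le N} l_j z^j$ (finitely many positive powers of $z$). Let $\mathcal H$ be the set of sequences $H=(H^{(k)})_{k\ge0}$ of elements of $\mathcal L$ with $H^{(0)}=1$ and, for $k\ge1$, $H^{(k)}=z^k+\sum_{l\ge1}H^k_l z^{-l}$; the coefficients $H^k_l$ are coordinates on $\mathcal H$, and we set $H^0_l=0$. The central system (CS) is the family of vector fields $X_j$, $j\ge1$, on $\mathcal H$, with associated times $t_j$, defined by $$\frac{\partial H^{(k)}}{\partial t_j}=H^{(j+k)}-H^{(j)}H^{(k)}+\sum_{l=1}^{k}H^j_lH^{(k-l)}+\sum_{l=1}^{j}H^k_lH^{(j-l)},\qquad k\ge0.$$ $\mathcal S_n=\{H\in\mathcal H: X_n(H)=0,\ H^{(n)}=z^n\}$; it is invariant under all $X_j$ and every point of it is determined by $(H^{(1)},\dots,H^{(n-1)})$. *)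

(* Formal Laurent series with finitely many positive powers
   are represented by their coefficient functions int -> R. *)
From HB Require Import structures.
From mathcomp Require Import all_boot all_order all_algebra.
From Stdlib Require Import ClassicalEpsilon.
Set Implicit Arguments. Unset Strict Implicit. Unset Printing Implicit Defensive.
Import Order.TTheory GRing.Theory Num.Theory.
Local Open Scope ring_scope.

Section CentralSystem.
Variable R : fieldType.

Definition lser := int -> R.

Definition is_laurent (f : lser) : Prop :=
  exists N : int, forall m : int, N < m -> f m = 0.

Definition lzero : lser := fun _ => 0.
Definition ladd (f g : lser) : lser := fun m => f m + g m.
Definition lopp (f : lser) : lser := fun m => - f m.
Definition zpow (k : int) : lser := fun m => if m == k then 1 else 0.
Definition lone : lser := zpow 0.
(* z^k * f *)
Definition lshift (k : int) (f : lser) : lser := fun m => f (m - k).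

(* an upper bound for the degree (chosen classically; meaningful for laurent f) *)
Definition ubound (f : lser) : int :=
  epsilon (inhabits (0 : int)) (fun N => forall m : int, N < m -> f m = 0).

(* product in L: coefficient of z^m is sum_i f_i g_(m-i), a finite sum *)
Definition lmul (f g : lser) : lser := fun m =>
  let d := ubound f + ubound g - m in
  if d < 0 then 0
  else \sum_(k < (absz d).+1) f (m - ubound g + k%:Z) * g (ubound g - k%:Z).

(* A point H of calH is given by its coordinates: hp k l = H^k_l (k, l >= 1);
   the values hp 0 _ and hp _ 0 are irrelevant. *)
Definition hpoint := nat -> nat -> R.

Definition Hc (hp : hpoint) (k l : nat) : R := if k == 0%N then 0 else hp k l.

(* the current H^(k): H^(0) = 1, H^(k) = z^k + sum_(l>=1) H^k_l z^-l *)
Definition current (hp : hpoint) (k : nat) : lser :=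
  if k == 0%N then lone
  else fun m => if m == k%:Z then 1 else if m < 0 then hp k (absz m) else 0.

(* The central system: X_j(H)^(k) = dH^(k)/dt_j *)
Definition CS (hp : hpoint) (j k : nat) : lser := fun m =>
  current hp (j + k) m - lmul (current hp j) (current hp k) m
  + \sum_(1 <= l < k.+1) Hc hp j l * current hp (k - l) m
  + \sum_(1 <= l < j.+1) Hc hp k l * current hp (j - l) m.

Definition in_Sn (n : nat) (hp : hpoint) : Prop :=
  (forall k : nat, CS hp n k = lzero) /\ current hp n = zpow n%:Z.

(* stationary Faa di Bruno basis: F^(a + n q) = z^(n q) H^(a), 0 <= a < n *)
Definition FdB (n : nat) (hp : hpoint) (j : int) : lser :=
  lshift (n%:Z * (j %/ n%:Z)%Z) (current hp (absz (j %% n%:Z)%Z)).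

Definition in_Hplus (n : nat) (hp : hpoint) (f : lser) : Prop :=
  exists (K : nat) (b : nat -> R),
    f = fun m => \sum_(k < K) b k * FdB n hp k%:Z m.

(* tilde H_- : possibly infinite combinations sum_(k>=0) b_k F^(-k-1),
   converging formally (coefficientwise only finitely many nonzero terms) *)
Definition in_Hminus (n : nat) (hp : hpoint) (f : lser) : Prop :=
  exists b : nat -> R, forall m : int, exists K : nat,
    (forall k : nat, (K <= k)%N -> FdB n hp (- (k%:Z + 1)) m = 0) /\
    f m = \sum_(k < K) b k * FdB n hp (- (k%:Z + 1)) m.

Definition is_decomp (n : nat) (hp : hpoint) (f p q : lser) : Prop :=
  [/\ in_Hplus n hp p, in_Hminus n hp q & f = ladd p q].

Definition direct_decomposition (n : nat) (hp : hpoint) : Prop :=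
  (forall f, is_laurent f -> exists p q, is_decomp n hp f p q) /\
  (forall f p q p' q', is_decomp n hp f p q -> is_decomp n hp f p' q' ->
     p = p' /\ q = q').

Definition piplus (n : nat) (hp : hpoint) (f : lser) : lser :=
  epsilon (inhabits lzero) (fun p => exists q, is_decomp n hp f p q).
Definition piminus (n : nat) (hp : hpoint) (f : lser) : lser :=
  ladd f (lopp (piplus n hp f)).

End CentralSystem.

From Pilot Require Import Defs.
From HB Require Import structures.
From mathcomp Require Import all_boot all_order all_algebra.
From mathcomp Require Import zify ring.
From Stdlib Require Import ClassicalEpsilon FunctionalExtensionality.
Import Order.TTheory GRing.Theory Num.Theory.
Local Open Scope ring_scope.
Set Implicit Arguments. Unset Strict Implicit. Unset Printing Implicit Defensive.

(* Each F^(j) is monic of degree j, so the Faa di Bruno basis is triangular with respect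
   to the degree: tilde H_- is exactly the space of series with only negative powers of z,
   and tilde pi_+ f is the unique element of tilde H_+ whose nonnegative coefficients are
   those of f.  On S_n the equation X_n H^(k) = 0 with H^(n) = z^n expresses H^(n+k) as
   z^n H^(k) plus a combination of lower currents, so every current lies in tilde H_+ and
   H^(j) = tilde pi_+ z^j.  Finally, on all of calH the nonnegative coefficients of
   X_j H^(a) vanish, so H^(j) H^(a) = [H^(j+a) + sum_l H^j_l H^(a-l) + sum_l H^a_l H^(j-l)]
   - X_j H^(a) is the splitting of H^(j) H^(a) and tilde pi_-(H^(a) H^(j)) = - X_j H^(a). *)

Section LaurentProduct.
Variable R : fieldType.
Implicit Types (f g : lser R) (A B : int).

Lemma sum_nat_pick (lo hi c : nat) (F : nat -> R) :
  (forall l, (lo <= l < hi)%N -> l != c -> F l = 0) ->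
  \sum_(lo <= l < hi) F l = if (lo <= c < hi)%N then F c else 0.
Proof.
move=> F0; rewrite (bigID (pred1 c)) /= big_nat1_eq [X in _ + X]big_nat_cond.
by rewrite big1 ?addr0 // => l /andP[/andP[lo_l l_hi] l_c]; apply: F0; rewrite ?lo_l.
Qed.

Lemma sum_ord_pick (N c : nat) (F : nat -> R) :
  (forall l, (l < N)%N -> l != c -> F l = 0) ->
  \sum_(l < N) F l = if (c < N)%N then F c else 0.
Proof. by move=> F0; rewrite -(big_mkord xpredT F) (sum_nat_pick (c := c)). Qed.

Definition vanish_above f A := forall m, A < m -> f m = 0.

Lemma vanish_above_le f A A' : vanish_above f A -> A <= A' -> vanish_above f A'.
Proof. by move=> fA le_AA' m lt_A'm; apply: fA; lia. Qed.

Lemma ubound_vanish f : is_laurent f -> vanish_above f (ubound f).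
Proof. exact: epsilon_spec. Qed.

(* [lmul f g] is [lmulb f g (ubound f) (ubound g)]; any degree bounds give the same product. *)
Definition lmulb f g A B : lser R := fun m =>
  let d := A + B - m in
  if d < 0 then 0
  else \sum_(k < (absz d).+1) f (m - B + k%:Z) * g (B - k%:Z).

Lemma lmulbC f g A B m : lmulb f g A B m = lmulb g f B A m.
Proof.
rewrite /lmulb /= (_ : B + A - m = A + B - m); last by ring.
case: ifP => // d_ge0.
rewrite (reindex_inj rev_ord_inj) /=; apply: eq_bigr => k _.
by rewrite mulrC; move: (ltn_ord k) => lt_k; congr (g _ * f _); lia.
Qed.

Lemma lmulb_vanish f g A B m : A + B < m -> lmulb f g A B m = 0.
Proof. by rewrite /lmulb /=; case: ifP => //; lia. Qed.

Lemma lmulb_widenl1 f g A B m :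
  vanish_above f A -> lmulb f g A B m = lmulb f g (A + 1) B m.
Proof.
move=> fA; rewrite /lmulb /= (_ : A + 1 + B - m = A + B - m + 1); last by ring.
case E: (A + B - m) => [D|[|D]].
- have -> : (D%:Z < 0) = false by lia.
  have -> : (D%:Z + 1 < 0) = false by lia.
  rewrite (_ : absz (D%:Z + 1) = D.+1); last by lia.
  by rewrite [in RHS]big_ord_recr /= fA ?mul0r ?addr0 //; lia.
- have -> : (Negz 0 + 1 < 0) = false by lia.
  by rewrite big_ord1 /= fA ?mul0r //; lia.
- by have -> : (Negz D.+1 + 1 < 0) = true by lia.
Qed.

Lemma lmulb_widenl f g A A' B m : vanish_above f A -> A <= A' ->
  lmulb f g A B m = lmulb f g A' B m.
Proof.
move=> fA le_AA'; rewrite -(_ : A + (absz (A' - A))%:Z = A'); last by lia.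
elim: (absz (A' - A)) => [|k IHk]; first by rewrite addr0.
rewrite IHk lmulb_widenl1; last by apply: vanish_above_le fA _; lia.
by congr lmulb; lia.
Qed.

Lemma lmulb_indep f g A B A' B' m :
  vanish_above f A -> vanish_above g B -> vanish_above f A' -> vanish_above g B' ->
  lmulb f g A B m = lmulb f g A' B' m.
Proof.
have widen A1 B1 : vanish_above f A1 -> vanish_above g B1 ->
    A1 <= Num.max A A' -> B1 <= Num.max B B' ->
    lmulb f g A1 B1 m = lmulb f g (Num.max A A') (Num.max B B') m.
  move=> fA1 gB1 le_A1 le_B1; rewrite (lmulb_widenl _ _ _ fA1 le_A1).
  by rewrite lmulbC (lmulb_widenl _ _ _ gB1 le_B1) lmulbC.
by move=> fA gB fA' gB'; rewrite (widen A B) // ?(widen A' B') //; lia.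
Qed.

Lemma lmulE f g A B : vanish_above f A -> vanish_above g B -> lmul f g = lmulb f g A B.
Proof.
move=> fA gB; apply: functional_extensionality => m.
by apply: lmulb_indep => //; apply: ubound_vanish; [exists A | exists B].
Qed.

Lemma lmulC f g A B : vanish_above f A -> vanish_above g B -> lmul f g = lmul g f.
Proof.
move=> fA gB; rewrite (lmulE fA gB) (lmulE gB fA).
by apply: functional_extensionality => m; apply: lmulbC.
Qed.

Lemma lmul_zpowl (k : int) g B : vanish_above g B -> lmul (zpow R k) g = Defs.lshift k g.
Proof.
have zk : vanish_above (zpow R k) k by move=> m lt_km; rewrite /zpow ifF //; lia.
move=> gB; rewrite (lmulE zk gB); apply: functional_extensionality => m.
rewrite /lmulb /Defs.lshift /=; case: ifP => [d_lt0|d_ge0]; first by rewrite gB //; lia.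
rewrite (sum_ord_pick (c := absz (k + B - m)%R)
  (F := fun l : nat => zpow R k (m - B + l%:Z) * g (B - l%:Z))) ?ltnSn.
  by rewrite /zpow ifT ?mul1r; [congr g|]; lia.
by move=> l _ ne_l; rewrite /zpow ifF ?mul0r //; lia.
Qed.

End LaurentProduct.

Section Currents.
Variables (R : fieldType) (hp : hpoint R).

Lemma current_nonneg (k : nat) (x : int) : 0 <= x ->
  current hp k x = if x == k%:Z then 1 else 0.
Proof.
move=> x_ge0; rewrite /current; case: (eqVneq k 0%N) => [->|k_gt0] //=.
by case: ifP => // _; rewrite ifF //; lia.
Qed.

Lemma current_neg (k : nat) (x : int) : x < 0 -> current hp k x = Hc hp k (absz x).
Proof.
move=> x_lt0; rewrite /current /Hc; case: (eqVneq k 0%N) => [_|k_gt0] /=.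
  by rewrite /lone /zpow ifF //; lia.
by rewrite ifF ?x_lt0 //; lia.
Qed.

Lemma current_vanish_above (k : nat) : vanish_above (current hp k) k%:Z.
Proof. by move=> m lt_km; rewrite current_nonneg ?ifF //; lia. Qed.

Lemma current_sub (k M c : nat) : current hp k (M%:Z - c%:Z) =
  if (M < c)%N then Hc hp k (c - M) else if M == (c + k)%N then 1 else 0.
Proof.
case: ltnP => [lt_Mc|le_cM].
  by rewrite current_neg; [congr Hc|]; lia.
rewrite current_nonneg; last by lia.
by case: ifP; case: ifP => //; lia.
Qed.

Lemma sum_Hc_current (b c M : nat) :
  \sum_(1 <= l < c.+1) Hc hp b l * current hp (c - l) M%:Z =
  if (M < c)%N then Hc hp b (c - M) else 0.
Proof.
have [lt_Mc|le_cM] := ltnP M c; last first.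
  rewrite big_nat big1 // => l /andP[l_ge1 l_le_c].
  by rewrite current_nonneg // ifF ?mulr0 //; lia.
rewrite (sum_nat_pick (c := (c - M)%N)); last first.
  by move=> l l_in ne_l; rewrite current_nonneg // ifF ?mulr0 //; lia.
case: ifP => [_|]; last by lia.
by rewrite current_nonneg // ifT ?mulr1 //; lia.
Qed.

(* Only z^j z^a and the two cross terms reach nonnegative degrees: the product of the
   two negative tails has only negative powers. *)
Lemma lmul_current_nonneg (j a M : nat) :
  lmul (current hp j) (current hp a) M%:Z =
  (if M == (j + a)%N then 1 else 0) + (if (M < a)%N then Hc hp j (a - M) else 0)
  + (if (M < j)%N then Hc hp a (j - M) else 0).
Proof.
rewrite (lmulE (@current_vanish_above j) (@current_vanish_above a)).
have [lt_M|le_M] := ltnP (j + a) M.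
  by rewrite lmulb_vanish; [rewrite !ifF ?addr0 //|]; lia.
rewrite /lmulb /= ifF; last by lia.
rewrite (_ : absz _ = (j + a - M)%N); last by lia.
rewrite big_ord_recl /= (_ : M%:Z - a%:Z + 0%:Z = M%:Z - a%:Z); last by lia.
rewrite (_ : a%:Z - 0%:Z = a%:Z); last by lia.
rewrite (@current_nonneg a a%:Z) // eqxx mulr1.
rewrite current_sub (_ : (M == a + j)%N = (M == j + a)%N) ?[(a + j)%N]addnC //.
set tail := \sum_(l < _) _; suff -> : tail = if (M < j)%N then Hc hp a (j - M) else 0.
  have [lt_Ma|_] := ltnP M a; last by rewrite addr0.
  by rewrite [X in X + _ + _]ifF ?add0r //; lia.
rewrite /tail (sum_ord_pick (N := (j + a - M)%N) (c := (j + a - M).-1)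
  (F := fun l => current hp j (M%:Z - a%:Z + (bump 0 l)%:Z) * current hp a (a%:Z - (bump 0 l)%:Z))).
  case: ifP => [lt_d|ge_d]; last by rewrite ifF //; lia.
  rewrite /bump /= (_ : M%:Z - a%:Z + _ = j%:Z); last by lia.
  rewrite (_ : a%:Z - _ = M%:Z - j%:Z); last by lia.
  rewrite (@current_nonneg j j%:Z) // eqxx mul1r current_sub.
  by case: ifP => // _; rewrite ifF //; lia.
move=> l lt_l ne_l; rewrite /bump /=; have [le_la|lt_al] := leqP l.+1 a.
  by rewrite (@current_nonneg a) ?ifF ?mulr0 //; lia.
by rewrite current_nonneg ?ifF ?mul0r //; lia.
Qed.

Lemma CS_nonneg_coef (j a M : nat) : CS hp j a M%:Z = 0.
Proof.
rewrite /CS !sum_Hc_current lmul_current_nonneg current_nonneg //.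
rewrite (_ : (M%:Z == (j + a)%N%:Z) = (M == (j + a)%N)) //; ring.
Qed.

End Currents.

Section FaaDiBrunoBasis.
Variables (R : fieldType) (n : nat) (hp : hpoint R).
Hypothesis n_gt0 : (0 < n)%N.
Implicit Types (f p q : lser R).

Local Notation F := (FdB n hp).
Local Notation Hplus := (in_Hplus n hp).
Local Notation Hminus := (in_Hminus n hp).

Lemma FdB_ge (j m : int) : j <= m -> F j m = if m == j then 1 else 0.
Proof.
move=> le_jm; rewrite /FdB /Defs.lshift.
have n_neq0 : n%:Z != 0 by lia.
have r_ge0 := modz_ge0 j n_neq0.
have r_lt : (j %% n%:Z)%Z < n%:Z by apply: ltz_pmod; lia.
have j_eq := divz_eq j n%:Z.
rewrite current_nonneg; last by lia.
by case: ifP => h1; case: ifP => h2 //; exfalso; lia.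
Qed.

Lemma FdB_gt (j m : int) : j < m -> F j m = 0.
Proof. by move=> lt_jm; rewrite FdB_ge ?ifF //; lia. Qed.

Lemma FdB_diag (j : int) : F j j = 1.
Proof. by rewrite FdB_ge ?eqxx. Qed.

Lemma FdB_shift (j : int) : F (j + n%:Z) = Defs.lshift n%:Z (F j).
Proof.
have n_neq0 : n%:Z != 0 by lia.
rewrite /FdB /Defs.lshift (_ : j + n%:Z = 1 * n%:Z + j) ?divzMDl ?modzMDl //; last by ring.
by apply: functional_extensionality => m; congr current; lia.
Qed.

Lemma FdB_small (j : nat) : (j < n)%N -> F j%:Z = current hp j.
Proof.
move=> lt_jn; rewrite /FdB /Defs.lshift divz_nat modz_nat divn_small // modn_small //.
by apply: functional_extensionality => m; rewrite mulr0 subr0.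
Qed.

Lemma sum_ord_widen (K K' : nat) (b G : nat -> R) : (K <= K')%N ->
  \sum_(k < K) b k * G k = \sum_(k < K') (if (k < K)%N then b k else 0) * G k.
Proof.
move=> le_KK'; rewrite (big_ord_widen K' (fun k => b k * G k) le_KK') big_mkcond.
by apply: eq_bigr => k _; case: ifP; rewrite ?mul0r.
Qed.

Lemma Hplus0 : Hplus (lzero R).
Proof. by exists 0%N, (fun _ => 0); apply: functional_extensionality => m; rewrite big_ord0. Qed.

Lemma HplusD f g : Hplus f -> Hplus g -> Hplus (ladd f g).
Proof.
move=> [K1 [b1 ->]] [K2 [b2 ->]].
exists (K1 + K2)%N, (fun k => (if (k < K1)%N then b1 k else 0) + (if (k < K2)%N then b2 k else 0)).
apply: functional_extensionality => m; rewrite /ladd.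
rewrite (@sum_ord_widen K1 (K1 + K2) b1 (fun k => F k%:Z m)) ?leq_addr //.
rewrite (@sum_ord_widen K2 (K1 + K2) b2 (fun k => F k%:Z m)) ?leq_addl //.
by rewrite -big_split; apply: eq_bigr => k _; rewrite mulrDl.
Qed.

Lemma HplusZ c f : Hplus f -> Hplus (fun m => c * f m).
Proof.
move=> [K [b ->]]; exists K, (fun k => c * b k).
by apply: functional_extensionality => m; rewrite mulr_sumr; apply: eq_bigr => k _; rewrite mulrA.
Qed.

Lemma Hplus_FdB (k : nat) : Hplus (F k%:Z).
Proof.
exists k.+1, (fun i => if i == k then 1 else 0); apply: functional_extensionality => m.
rewrite (sum_ord_pick (c := k) (F := fun i => (if i == k then 1 else 0) * F i%:Z m)).
  by rewrite ltnSn eqxx mul1r.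
by move=> l _ /negbTE ->; rewrite mul0r.
Qed.

Lemma Hplus_sum (s : seq nat) (h : nat -> lser R) :
  (forall i, i \in s -> Hplus (h i)) -> Hplus (fun m => \sum_(i <- s) h i m).
Proof.
elim: s => [|i s IHs] hs.
  rewrite (_ : (fun m => _) = lzero R); first exact: Hplus0.
  by apply: functional_extensionality => m; rewrite big_nil.
rewrite (_ : (fun m => _) = ladd (h i) (fun m => \sum_(i <- s) h i m)); last first.
  by apply: functional_extensionality => m; rewrite big_cons.
apply: HplusD; first by apply: hs; rewrite mem_head.
by apply: IHs => i' s_i'; apply: hs; rewrite in_cons s_i' orbT.
Qed.

Lemma Hplus_lshift f : Hplus f -> Hplus (Defs.lshift n%:Z f).
Proof.
move=> [K [b ->]].
rewrite (_ : Defs.lshift _ _ = fun m => \sum_(i <- index_iota 0 K) b i * F (i + n)%N%:Z m).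
  by apply: Hplus_sum => i _; apply: HplusZ; apply: Hplus_FdB.
apply: functional_extensionality => m; rewrite /Defs.lshift big_mkord.
by apply: eq_bigr => k _; rewrite PoszD FdB_shift.
Qed.

Lemma FdB_comb_eq0 (K : nat) (c : nat -> R) :
  (forall M : nat, \sum_(k < K) c k * F k%:Z M%:Z = 0) -> forall k, (k < K)%N -> c k = 0.
Proof.
elim: K => [//|K IHK] comb0 k.
have cK : c K = 0.
  have := comb0 K; rewrite big_ord_recr /= FdB_diag mulr1 big1 ?add0r //.
  by move=> i _; rewrite FdB_gt ?mulr0 //; have := ltn_ord i; lia.
rewrite ltnS leq_eqVlt => /orP [/eqP -> //|lt_kK].
by apply: IHK => // M; have := comb0 M; rewrite big_ord_recr /= cK mul0r addr0.
Qed.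

Lemma Hplus_eq0 p : Hplus p -> (forall M : nat, p M%:Z = 0) -> p = lzero R.
Proof.
move=> [K [b ->]] p0; have b0 := FdB_comb_eq0 p0.
by apply: functional_extensionality => m; rewrite big1 // => k _; rewrite b0 ?mul0r.
Qed.

Lemma Hminus_nonneg q m : Hminus q -> 0 <= m -> q m = 0.
Proof.
move=> [b qb] m_ge0; have [K [_ ->]] := qb m.
by apply: big1 => k _; rewrite FdB_gt ?mulr0 //; lia.
Qed.

Lemma Hplus_lift (N : nat) f : (forall m, N%:Z <= m -> f m = 0) ->
  exists2 p, Hplus p & forall m, 0 <= m -> p m = f m.
Proof.
elim: N f => [|N IHN] f f0.
  by exists (lzero R); [exact: Hplus0 | move=> m m_ge0; rewrite f0].
pose g m := f m - f N%:Z * F N%:Z m.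
have [|p Hp pg] := IHN g.
  move=> m; rewrite /g le_eqVlt => /orP [/eqP <-|lt_Nm]; first by rewrite FdB_diag mulr1 subrr.
  by rewrite f0 ?FdB_gt ?mulr0 ?subrr //; lia.
exists (ladd p (fun m => f N%:Z * F N%:Z m)); first by apply: HplusD => //; apply/HplusZ/Hplus_FdB.
by move=> m m_ge0; rewrite /ladd pg // subrK.
Qed.

Section MinusCoefficients.
Variable q : lser R.
Local Notation G k := (F (- (k%:Z + 1))).

(* [minus_coefs K] solves the triangular system q(-k-1) = sum_(i <= k) b_i G_i(-k-1)
   for k < K; its entries do not change once computed. *)
Fixpoint minus_coefs (K : nat) : nat -> R :=
  if K is K'.+1 then fun i =>
    if i == K' then q (- (K'%:Z + 1)) - \sum_(i' < K') minus_coefs K' i' * G i' (- (K'%:Z + 1))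
    else minus_coefs K' i
  else fun _ => 0.

Lemma minus_coefs_stable K i : (i < K)%N -> minus_coefs K i = minus_coefs i.+1 i.
Proof.
elim: K => [//|K IHK] lt_iK; rewrite [LHS]/=.
have [->|ne_iK] := eqVneq i K; first by rewrite /= eqxx.
by apply: IHK; rewrite ltnS leq_eqVlt (negbTE ne_iK) in lt_iK.
Qed.

Lemma minus_coefsE k :
  q (- (k%:Z + 1)) = \sum_(i < k.+1) minus_coefs i.+1 i * G i (- (k%:Z + 1)).
Proof.
rewrite big_ord_recr /= FdB_diag mulr1 eqxx.
rewrite [X in _ = X + _](eq_bigr (fun i : 'I_k => minus_coefs k i * G i (- (k%:Z + 1)))).
  by rewrite subrKC.
by move=> i _; rewrite (minus_coefs_stable (ltn_ord i)).
Qed.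

Lemma Hminus_of_nonneg : (forall m, 0 <= m -> q m = 0) -> Hminus q.
Proof.
move=> q0; exists (fun i => minus_coefs i.+1 i); case=> [M|k].
  exists 0%N; split; last by rewrite big_ord0 q0.
  by move=> k _; rewrite FdB_gt //; lia.
exists k.+1; split; first by move=> k' lt_k; rewrite FdB_gt //; lia.
by rewrite (_ : Negz k = - (k%:Z + 1)); [exact: minus_coefsE | lia].
Qed.

End MinusCoefficients.

Lemma decomp_uniq f p q p' q' : is_decomp n hp f p q -> is_decomp n hp f p' q' ->
  p = p' /\ q = q'.
Proof.
move=> [Hp Hq ->] [Hp' Hq' pq_eq].
have diff0 : ladd p (fun m => -1 * p' m) = lzero R.
  apply: Hplus_eq0 => [|M]; first by apply: HplusD => //; apply: HplusZ.
  have := congr1 (fun h => h M%:Z) pq_eq.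
  by rewrite /ladd (Hminus_nonneg Hq) ?(Hminus_nonneg Hq') // !addr0 => ->; rewrite mulN1r subrr.
have p_eq : p = p'.
  apply: functional_extensionality => m; apply/eqP; rewrite -subr_eq0.
  by have := congr1 (fun h => h m) diff0; rewrite /ladd mulN1r => ->.
split=> //; apply: functional_extensionality => m.
by have := congr1 (fun h => h m) pq_eq; rewrite /ladd p_eq => /addrI.
Qed.

Lemma is_decomp_sub f p : Hplus p -> (forall m, 0 <= m -> p m = f m) ->
  is_decomp n hp f p (ladd f (lopp p)).
Proof.
move=> Hp pf; split=> //.
  by apply: Hminus_of_nonneg => m m_ge0; rewrite /ladd /lopp pf // subrr.
by apply: functional_extensionality => m; rewrite /ladd /lopp subrKC.
Qed.

Lemma decomp_exists f : is_laurent f -> exists p q, is_decomp n hp f p q.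
Proof.
move=> [N f0]; have [p Hp pf] := @Hplus_lift (absz N).+1 f (fun m le_m => f0 m ltac:(lia)).
by exists p, (ladd f (lopp p)); apply: is_decomp_sub.
Qed.

Lemma direct_decompositionP : direct_decomposition n hp.
Proof. by split; [exact: decomp_exists | exact: decomp_uniq]. Qed.

Lemma piplusE f p : Hplus p -> (forall m, 0 <= m -> p m = f m) -> piplus n hp f = p.
Proof.
move=> Hp pf; have dec := is_decomp_sub Hp pf.
rewrite /piplus; have [q dec'] := epsilon_spec (inhabits (lzero R))
  (fun p => exists q, is_decomp n hp f p q) (ex_intro _ p (ex_intro _ _ dec)).
by have [] := decomp_uniq dec' dec.
Qed.

End FaaDiBrunoBasis.

Section StationaryManifold.
Variables (R : fieldType) (n : nat) (hp : hpoint R).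
Hypotheses (n_gt0 : (0 < n)%N) (hp_Sn : in_Sn n hp).

Local Notation Hplus := (in_Hplus n hp).

Lemma Hc_stationary l : (0 < l)%N -> Hc hp n l = 0.
Proof.
move=> l_gt0; have := congr1 (fun h => h (- l%:Z)) hp_Sn.2.
rewrite current_neg; last by lia.
rewrite (_ : absz _ = l); last by lia.
by move=> ->; rewrite /zpow; case: ifP => //; lia.
Qed.

(* X_n H^(k) = 0 with H^(n) = z^n reads H^(n+k) = z^n H^(k) - sum_(l=1..n) H^k_l H^(n-l). *)
Lemma current_addn k : current hp (n + k) =
  ladd (Defs.lshift n%:Z (current hp k))
       (fun m => -1 * \sum_(1 <= l < n.+1) Hc hp k l * current hp (n - l) m).
Proof.
apply: functional_extensionality => m; have := congr1 (fun h => h m) (hp_Sn.1 k).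
rewrite /CS /lzero /ladd hp_Sn.2 (lmul_zpowl _ (@current_vanish_above _ hp k)).
rewrite big_nat big1 => [CS0|l /andP[l_gt0 _]]; last by rewrite Hc_stationary ?mul0r.
by apply/eqP; rewrite -subr_eq0; apply/eqP; rewrite -[RHS]CS0; ring.
Qed.

Lemma current_Hplus j : Hplus (current hp j).
Proof.
elim/ltn_ind: j => j IHj; have [lt_jn|le_nj] := ltnP j n.
  by rewrite -(FdB_small hp lt_jn); apply: Hplus_FdB.
rewrite -(subnKC le_nj) current_addn; apply: HplusD.
  by apply/Hplus_lshift/IHj; lia.
apply/HplusZ/Hplus_sum => l; rewrite mem_index_iota => l_in.
by apply/HplusZ/IHj; lia.
Qed.

Lemma current_piplus j : current hp j = piplus n hp (zpow R j%:Z).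
Proof.
by apply/esym/(piplusE n_gt0 (current_Hplus j)) => m m_ge0; rewrite current_nonneg.
Qed.

Lemma CS_piminus j a :
  CS hp j a = lopp (piminus n hp (lmul (current hp a) (piplus n hp (zpow R j%:Z)))).
Proof.
rewrite -current_piplus (lmulC (@current_vanish_above _ hp a) (@current_vanish_above _ hp j)).
pose P := ladd (ladd (current hp (j + a))
  (fun m => \sum_(1 <= l < a.+1) Hc hp j l * current hp (a - l) m))
  (fun m => \sum_(1 <= l < j.+1) Hc hp a l * current hp (j - l) m).
have CSE : CS hp j a = ladd P (lopp (lmul (current hp j) (current hp a))).
  by apply: functional_extensionality => m; rewrite /CS /P /ladd /lopp; ring.
have piplus_prod : piplus n hp (lmul (current hp j) (current hp a)) = P.
  apply: piplusE => // [|m]; last first.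
    case: m => // M _; apply/eqP; rewrite -subr_eq0.
    by have := CS_nonneg_coef hp j a M; rewrite CSE /ladd /lopp => <-.
  have Hplus_sum_Hc b c : Hplus (fun m => \sum_(1 <= l < c.+1) Hc hp b l * current hp (c - l) m).
    by apply: Hplus_sum => l _; apply/HplusZ/current_Hplus.
  by apply/HplusD/Hplus_sum_Hc/HplusD/Hplus_sum_Hc/current_Hplus.
rewrite CSE /piminus piplus_prod; apply: functional_extensionality => m.
by rewrite /lopp /ladd; ring.
Qed.

End StationaryManifold.

Theorem mainTheorem9 (R : fieldType) (n : nat) (hp : hpoint R) :
  (2 <= n)%N -> in_Sn n hp ->
  direct_decomposition n hp /\
  (forall j : nat, current hp j = piplus n hp (zpow R j%:Z)) /\
  (forall j a : nat, (1 <= j)%N -> (1 <= a <= n.-1)%N ->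
     CS hp j a = lopp (piminus n hp (lmul (current hp a) (piplus n hp (zpow R j%:Z))))).
Proof.
move=> n_ge2 hp_Sn; have n_gt0 : (0 < n)%N by apply: leq_trans n_ge2.
split; first exact: direct_decompositionP.
split=> [j|j a _ _]; first exact: current_piplus.
exact: CS_piminus.
Qed.
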